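(* Let $n\ge 1$, $M\ge1$ be integers and $a=(a_0,\dots,a_n)\in\mathbb{Z}^{n+1}$ with $0\le a_i\le M$ and $a_0=a_n=0$. If there exists a non-periodic real-valued tropical recurrent minimal sequence satisfying $a$, then there exists a non-periodic tropical recurrent sequence satisfying $a$ all of whose entries lie in $V=\{j+i/(2n+2): 0\le j<M,\ 0\le i\le 2n+2,\ i,j\in\mathbb{Z}\}$.
   Context: A tropical recurrent sequence is $y=(y_j)_{j\in\mathbb{Z}}$ with real entries; it satisfies $a$ if for every $k\in\mathbb{Z}$ the minimum $\min_{0\le i\le n}\{a_i+y_{i+k}\}$ is attained for at least two different indices $i$; it is minimal if for every $j\in\mathbb{Z}$ there is $k$ with $j-n\le k\le j$ and $a_{j-k}+y_j=\min_{0\le i\le n}\{a_i+y_{i+k}\}$. It is periodic if there is $d\ge1$ with $y_{j+d}=y_j$ for all $j$, and non-periodic otherwise. *)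

From Stdlib Require Import Reals ZArith Lia Lra.
Open Scope R_scope.

(* A tropical recurrent sequence y : Z -> R; a = (a_0,...,a_n) given as a : nat -> Z,
   only the values a 0, ..., a n matter. *)

Definition trop_term (n : nat) (a : nat -> Z) (y : Z -> R) (k : Z) (i : nat) : R :=
  IZR (a i) + y (Z.of_nat i + k)%Z.

Definition attains_min (n : nat) (a : nat -> Z) (y : Z -> R) (k : Z) (i0 : nat) : Prop :=
  (i0 <= n)%nat /\ forall i : nat, (i <= n)%nat -> trop_term n a y k i0 <= trop_term n a y k i.

Definition satisfies (n : nat) (a : nat -> Z) (y : Z -> R) : Prop :=
  forall k : Z, exists i1 i2 : nat,
    i1 <> i2 /\ attains_min n a y k i1 /\ attains_min n a y k i2.

Definition minimal_seq (n : nat) (a : nat -> Z) (y : Z -> R) : Prop :=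
  forall j : Z, exists k : Z,
    (j - Z.of_nat n <= k <= j)%Z /\ attains_min n a y k (Z.to_nat (j - k)).

Definition periodic (y : Z -> R) : Prop :=
  exists d : Z, (1 <= d)%Z /\ forall j : Z, y (j + d)%Z = y j.

Definition in_V (n M : nat) (x : R) : Prop :=
  exists j i : Z, (0 <= j < Z.of_nat M)%Z /\ (0 <= i <= 2 * Z.of_nat n + 2)%Z /\
    x = IZR j + IZR i / IZR (2 * Z.of_nat n + 2).

From Stdlib Require Import Reals ZArith Lia Lra Classical.
Open Scope R_scope.

(* Subtracting the minimum c of y_0, ..., y_(n-1) normalises y: since a >= 0 and
   a_0 = a_n = 0, the two-minima condition propagates the bound y >= c window by window,
   and minimality then gives y <= c + M.  For a threshold s in (0, 1], rounding x up when
   its fractional part is >= s and down otherwise is monotone and commutes with integer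
   translations, so it preserves the condition and produces sequences with values in
   {0, ..., M}, a subset of V.  If all these roundings are periodic, either some entry y_j
   has a positive fractional part not shared by y_0, ..., y_(n-1); then two thresholds
   around it give roundings that agree on [0, n) but differ at j, and gluing one on the
   negative indices to the other on the nonnegative ones is not periodic.  Or finitely
   many thresholds determine y, which would then inherit a common period. *)

Definition has_period (y : Z -> R) (d : Z) : Prop := forall j, y (j + d)%Z = y j.

Lemma has_period_mul (y : Z -> R) (d : Z) :
  has_period y d -> forall t, has_period y (t * d).
Proof.
  intros Hd t. induction t as [|t IH|t IH] using Z.peano_ind; intros j.
  - now rewrite Z.mul_0_l, Z.add_0_r.
  - replace (j + Z.succ t * d)%Z with (j + t * d + d)%Z by (unfold Z.succ; ring).
    now rewrite Hd, IH.
  - rewrite <- Hd.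
    replace (j + Z.pred t * d + d)%Z with (j + t * d)%Z by (unfold Z.pred; ring).
    apply IH.
Qed.

Lemma common_period (F : nat -> Z -> R) (m : nat) :
  (forall i, (i <= m)%nat -> periodic (F i)) ->
  exists P, (1 <= P)%Z /\ forall i, (i <= m)%nat -> has_period (F i) P.
Proof.
  induction m as [|m IH]; intros HF.
  - destruct (HF 0%nat (le_n 0)) as [d [Hd Pd]]. exists d. split; [exact Hd|].
    intros i Hi. replace i with 0%nat by lia. exact Pd.
  - destruct IH as [P [HP PP]]; [intros i Hi; apply HF; lia|].
    destruct (HF (S m) (le_n _)) as [d [Hd Pd]].
    exists (P * d)%Z. split; [nia|]. intros i Hi.
    destruct (Nat.eq_dec i (S m)) as [->|Hne].
    + now apply has_period_mul.
    + rewrite Z.mul_comm. apply has_period_mul, PP. lia.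
Qed.

Lemma periodic_eq_of_eq_on (u w : Z -> R) (d e : Z) (S : Z -> Prop) :
  has_period u d -> has_period w e ->
  (forall j, exists t, S (j + t * (d * e))%Z) ->
  (forall j, S j -> u j = w j) -> forall j, u j = w j.
Proof.
  intros Hu Hw HS Huw j. destruct (HS j) as [t Ht].
  rewrite <- (has_period_mul u d Hu (t * e) j), <- (has_period_mul w e Hw (t * d) j).
  replace (j + t * e * d)%Z with (j + t * (d * e))%Z by ring.
  replace (j + t * d * e)%Z with (j + t * (d * e))%Z by ring.
  now apply Huw.
Qed.

Lemma attains_min_ext (n : nat) (a : nat -> Z) (y y' : Z -> R) (k : Z) (i0 : nat) :
  (forall i, (i <= n)%nat -> y (Z.of_nat i + k)%Z = y' (Z.of_nat i + k)%Z) ->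
  attains_min n a y k i0 -> attains_min n a y' k i0.
Proof.
  intros Hyy' [Hi0 Hmin]. split; [exact Hi0|]. intros i Hi.
  unfold trop_term. rewrite <- !Hyy' by assumption. now apply Hmin.
Qed.

Lemma satisfies_comp (n : nat) (a : nat -> Z) (y : Z -> R) (f : R -> R) :
  (forall x x', x <= x' -> f x <= f x') ->
  (forall (m : Z) x, f (IZR m + x) = IZR m + f x) ->
  satisfies n a y -> satisfies n a (fun j => f (y j)).
Proof.
  intros Hmono Hshift Hy k. destruct (Hy k) as (i1 & i2 & Hne & [Hi1 H1] & [Hi2 H2]).
  exists i1, i2. unfold attains_min, trop_term in *.
  split; [exact Hne|]. split; split; try assumption;
    intros i Hi; rewrite <- !Hshift; now apply Hmono; auto.
Qed.

Definition glue (u u' : Z -> R) (j : Z) : R := if (j <? 0)%Z then u j else u' j.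

(* A window [k, k + n] with k < 0 meets the nonnegative integers only inside [0, n). *)
Lemma satisfies_glue (n : nat) (a : nat -> Z) (u u' : Z -> R) :
  satisfies n a u -> satisfies n a u' ->
  (forall i, (i < n)%nat -> u (Z.of_nat i) = u' (Z.of_nat i)) ->
  satisfies n a (glue u u').
Proof.
  intros Hu Hu' Hagree k.
  set (v := if (k <? 0)%Z then u else u').
  assert (Hv : satisfies n a v) by (unfold v; destruct (k <? 0)%Z; assumption).
  assert (Hwin : forall i, (i <= n)%nat ->
                   v (Z.of_nat i + k)%Z = glue u u' (Z.of_nat i + k)%Z).
  { intros i Hi. unfold v, glue.
    destruct (Z.ltb_spec k 0), (Z.ltb_spec (Z.of_nat i + k) 0);
      try reflexivity; try lia.
    replace (Z.of_nat i + k)%Z with (Z.of_nat (Z.to_nat (Z.of_nat i + k))) by lia.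
    apply Hagree. lia. }
  destruct (Hv k) as (i1 & i2 & Hne & H1 & H2).
  exists i1, i2. split; [exact Hne|].
  split; eapply attains_min_ext; eassumption.
Qed.

Lemma glue_not_periodic (u u' : Z -> R) (j0 : Z) :
  periodic u -> periodic u' -> u j0 <> u' j0 -> ~ periodic (glue u u').
Proof.
  intros [d [Hd Pd]] [d' [Hd' Pd']] Hne [e [He Pe]]. apply Hne.
  transitivity (glue u u' j0).
  - apply (periodic_eq_of_eq_on u _ d e (fun j => (j < 0)%Z)); try assumption.
    + intros j. exists (- (Z.abs j + 1))%Z. nia.
    + intros j Hj. unfold glue. now destruct (Z.ltb_spec j 0); try lia.
  - symmetry.
    apply (periodic_eq_of_eq_on u' _ d' e (fun j => (0 <= j)%Z)); try assumption.
    + intros j. exists (Z.abs j + 1)%Z. nia.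
    + intros j Hj. unfold glue. now destruct (Z.ltb_spec j 0); try lia.
Qed.

Lemma finite_argmin (f : nat -> R) (m : nat) :
  exists i0, (i0 <= m)%nat /\ forall i, (i <= m)%nat -> f i0 <= f i.
Proof.
  induction m as [|m [i0 [Hi0 Hmin]]].
  - exists 0%nat. split; [lia|]. intros i Hi. replace i with 0%nat by lia. lra.
  - destruct (Rle_lt_dec (f i0) (f (S m))).
    + exists i0. split; [lia|]. intros i Hi.
      destruct (Nat.eq_dec i (S m)) as [->|]; [assumption|]. apply Hmin. lia.
    + exists (S m). split; [lia|]. intros i Hi.
      destruct (Nat.eq_dec i (S m)) as [->|]; [lra|].
      specialize (Hmin i ltac:(lia)). lra.
Qed.

Section Bounds.

Variables (n : nat) (a : nat -> Z) (y : Z -> R).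
Hypothesis n_ge1 : (1 <= n)%nat.
Hypothesis a_ge0 : forall i, (i <= n)%nat -> (0 <= a i)%Z.
Hypothesis a_first : a 0%nat = 0%Z.
Hypothesis a_last : a n = 0%Z.
Hypothesis y_sat : satisfies n a y.

Lemma entry_le_trop_term k i : (i <= n)%nat -> y (Z.of_nat i + k)%Z <= trop_term n a y k i.
Proof. intros Hi. unfold trop_term. pose proof (IZR_le _ _ (a_ge0 i Hi)). lra. Qed.

Lemma min_not_last k : exists i, (i < n)%nat /\ attains_min n a y k i.
Proof.
  destruct (y_sat k) as (i1 & i2 & Hne & H1 & H2).
  destruct (Nat.eq_dec i1 n); [exists i2 | exists i1]; split;
    try assumption; destruct H1, H2; lia.
Qed.

Lemma min_not_first k : exists i, (1 <= i <= n)%nat /\ attains_min n a y k i.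
Proof.
  destruct (y_sat k) as (i1 & i2 & Hne & H1 & H2).
  destruct (Nat.eq_dec i1 0); [exists i2 | exists i1]; split;
    try assumption; destruct H1, H2; lia.
Qed.

(* The minimum at [k] is attained inside [k, k + n - 1], so the new entry [y (n + k)]
   is at least an entry of that window; symmetrically going left. *)
Lemma window_lower_bound (c : R) :
  (forall i, (i < n)%nat -> c <= y (Z.of_nat i)) -> forall j, c <= y j.
Proof.
  intros H0.
  assert (Hwin : forall k i, (i < n)%nat -> c <= y (Z.of_nat i + k)%Z).
  { intros k. induction k as [|k IH|k IH] using Z.peano_ind; intros i Hi.
    - rewrite Z.add_0_r. auto.
    - destruct (Nat.eq_dec i (n - 1)) as [->|Hne].
      + destruct (min_not_last k) as [i' [Hi' [_ Hmin]]].
        specialize (Hmin n (le_n n)).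
        pose proof (entry_le_trop_term k i' ltac:(lia)). pose proof (IH i' Hi').
        unfold trop_term in *. rewrite a_last in Hmin.
        replace (Z.of_nat (n - 1) + Z.succ k)%Z with (Z.of_nat n + k)%Z by lia. lra.
      + replace (Z.of_nat i + Z.succ k)%Z with (Z.of_nat (S i) + k)%Z by lia.
        apply IH. lia.
    - destruct (Nat.eq_dec i 0) as [->|Hne].
      + destruct (min_not_first (Z.pred k)) as [i' [Hi' [_ Hmin]]].
        specialize (Hmin 0%nat ltac:(lia)).
        pose proof (entry_le_trop_term (Z.pred k) i' ltac:(lia)).
        pose proof (IH (i' - 1)%nat ltac:(lia)).
        replace (Z.of_nat (i' - 1) + k)%Z with (Z.of_nat i' + Z.pred k)%Z in * by lia.
        unfold trop_term in *. rewrite a_first in Hmin. lra.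
      + replace (Z.of_nat i + Z.pred k)%Z with (Z.of_nat (i - 1) + k)%Z by lia.
        apply IH. lia. }
  intros j. replace j with (Z.of_nat 0 + j)%Z by lia. apply Hwin. lia.
Qed.

Lemma window_small_entry (c : R) :
  (exists i, (i < n)%nat /\ y (Z.of_nat i) <= c) ->
  forall k, exists i, (i < n)%nat /\ y (Z.of_nat i + k)%Z <= c.
Proof.
  intros H0 k. induction k as [|k IH|k IH] using Z.peano_ind.
  - destruct H0 as [i [Hi Hy]]. exists i. now rewrite Z.add_0_r.
  - destruct IH as [i [Hi Hy]]. destruct (Nat.eq_dec i 0) as [->|Hne].
    + destruct (min_not_first k) as [i' [Hi' [_ Hmin]]].
      specialize (Hmin 0%nat ltac:(lia)).
      pose proof (entry_le_trop_term k i' ltac:(lia)).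
      exists (i' - 1)%nat. split; [lia|].
      replace (Z.of_nat (i' - 1) + Z.succ k)%Z with (Z.of_nat i' + k)%Z by lia.
      unfold trop_term in *. rewrite a_first in Hmin. simpl in Hmin, Hy. lra.
    + exists (i - 1)%nat. split; [lia|].
      now replace (Z.of_nat (i - 1) + Z.succ k)%Z with (Z.of_nat i + k)%Z by lia.
  - destruct IH as [i [Hi Hy]]. destruct (Nat.eq_dec i (n - 1)) as [->|Hne].
    + destruct (min_not_last (Z.pred k)) as [i' [Hi' [_ Hmin]]].
      specialize (Hmin n (le_n n)).
      pose proof (entry_le_trop_term (Z.pred k) i' ltac:(lia)).
      exists i'. split; [exact Hi'|].
      replace (Z.of_nat (n - 1) + k)%Z with (Z.of_nat n + Z.pred k)%Z in Hy by lia.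
      unfold trop_term in *. rewrite a_last in Hmin. lra.
    + exists (S i). split; [lia|].
      now replace (Z.of_nat (S i) + Z.pred k)%Z with (Z.of_nat i + k)%Z by lia.
Qed.

(* [y j] takes part in the minimum of a window that also contains an entry [<= c]. *)
Lemma minimal_upper_bound (M : nat) (c : R) :
  minimal_seq n a y -> (forall i, (i <= n)%nat -> (a i <= Z.of_nat M)%Z) ->
  (exists i, (i < n)%nat /\ y (Z.of_nat i) <= c) ->
  forall j, y j <= c + IZR (Z.of_nat M).
Proof.
  intros Hminimal HaM Hsmall j.
  destruct (Hminimal j) as [k [Hk [_ Hmin]]].
  destruct (window_small_entry c Hsmall k) as [i [Hi Hy]].
  specialize (Hmin i ltac:(lia)).
  pose proof (entry_le_trop_term k (Z.to_nat (j - k)) ltac:(lia)).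
  pose proof (IZR_le _ _ (HaM i ltac:(lia))).
  unfold trop_term in *.
  rewrite Z2Nat.id, Z.sub_add in * by lia. lra.
Qed.

Lemma minimal_bounded (M : nat) :
  minimal_seq n a y -> (forall i, (i <= n)%nat -> (a i <= Z.of_nat M)%Z) ->
  exists c, forall j, c <= y j <= c + IZR (Z.of_nat M).
Proof.
  intros Hminimal HaM.
  destruct (finite_argmin (fun i => y (Z.of_nat i)) (n - 1)) as [i0 [Hi0 Hargmin]].
  exists (y (Z.of_nat i0)). intros j. split.
  - apply window_lower_bound. intros i Hi. apply Hargmin. lia.
  - apply minimal_upper_bound; try assumption. exists i0. split; [lia|lra].
Qed.

End Bounds.

Definition quantize (s x : R) : R := IZR (Zfloor (x + 1 - s)).

Lemma quantize_le (s x x' : R) : x <= x' -> quantize s x <= quantize s x'.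
Proof. intros H. apply IZR_le, Zfloor_le. lra. Qed.

Lemma quantize_add_int (s : R) (m : Z) (x : R) :
  quantize s (IZR m + x) = IZR m + quantize s x.
Proof.
  unfold quantize. replace (IZR m + x + 1 - s) with (x + 1 - s + IZR m) by ring.
  now rewrite Zfloor_addz, plus_IZR, Rplus_comm.
Qed.

Lemma quantize_high (s x : R) :
  0 < s -> s <= frac_part x -> quantize s x = IZR (Int_part x) + 1.
Proof.
  intros Hs Hx. unfold quantize, frac_part in *. pose proof (base_Int_part x).
  rewrite <- plus_IZR. f_equal. apply Zfloor_eq. rewrite plus_IZR. lra.
Qed.

Lemma quantize_low (s x : R) :
  frac_part x < s <= 1 -> quantize s x = IZR (Int_part x).
Proof.
  intros Hx. unfold quantize, frac_part in *. pose proof (base_Int_part x).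
  f_equal. apply Zfloor_eq. lra.
Qed.

Lemma quantize_range (s x : R) (M : Z) : 0 < s <= 1 -> 0 <= x <= IZR M ->
  (0 <= Zfloor (x + 1 - s) <= M)%Z.
Proof.
  intros Hs Hx. pose proof (Zfloor_bound (x + 1 - s)). split.
  - apply Zfloor_lub. lra.
  - apply Z.lt_succ_r, lt_IZR. rewrite succ_IZR. lra.
Qed.

Lemma in_V_int (n M : nat) (z : Z) :
  (1 <= M)%nat -> (0 <= z <= Z.of_nat M)%Z -> in_V n M (IZR z).
Proof.
  intros HM Hz. assert (Hden : IZR (2 * Z.of_nat n + 2) <> 0) by (apply not_0_IZR; lia).
  destruct (Z.eq_dec z (Z.of_nat M)) as [->|Hne].
  - exists (Z.of_nat M - 1)%Z, (2 * Z.of_nat n + 2)%Z. split; [lia|split; [lia|]].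
    rewrite minus_IZR. field. exact Hden.
  - exists z, 0%Z. split; [lia|split; [lia|]]. unfold Rdiv. ring.
Qed.

(* [quantize 1] is the integer part. *)
Lemma eq_of_quantize (x x' : R) :
  quantize 1 x = quantize 1 x' ->
  (0 < frac_part x -> quantize (frac_part x) x = quantize (frac_part x) x') ->
  (0 < frac_part x' -> quantize (frac_part x') x = quantize (frac_part x') x') ->
  x = x'.
Proof.
  intros H1 Hx Hx'. pose proof (base_fp x). pose proof (base_fp x').
  rewrite !quantize_low in H1 by lra.
  rewrite (Rplus_Int_part_frac_part x), (Rplus_Int_part_frac_part x'), H1.
  f_equal. destruct (Rtotal_order (frac_part x) (frac_part x')) as [Hlt|[Heq|Hgt]].
  - exfalso. specialize (Hx' ltac:(lra)).
    rewrite quantize_low, quantize_high in Hx' by lra. lra.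
  - exact Heq.
  - exfalso. specialize (Hx ltac:(lra)).
    rewrite quantize_high, quantize_low in Hx by lra. lra.
Qed.

Lemma exists_gap (t : nat -> R) (th : R) (m : nat) :
  th < 1 -> (forall i, (i < m)%nat -> t i <> th) ->
  exists e, 0 < e /\ th + e <= 1 /\ forall i, (i < m)%nat -> t i < th \/ th + e <= t i.
Proof.
  intros Hth. induction m as [|m IH]; intros Ht.
  - exists (1 - th). split; [lra|split; [lra|]]. intros i Hi. lia.
  - destruct IH as [e [He [He1 Hgap]]]; [intros i Hi; apply Ht; lia|].
    assert (Htm : t m <> th) by (apply Ht; lia).
    destruct (Rlt_le_dec (t m) th) as [Hlt|Hge].
    + exists e. split; [lra|split; [lra|]]. intros i Hi.
      destruct (Nat.eq_dec i m) as [->|Hne]; [now left|]. apply Hgap. lia.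
    + exists (Rmin e (t m - th)).
      pose proof (Rmin_l e (t m - th)). pose proof (Rmin_r e (t m - th)).
      split; [apply Rmin_glb_lt; lra|split; [lra|]]. intros i Hi.
      destruct (Nat.eq_dec i m) as [->|Hne]; [right; lra|].
      destruct (Hgap i ltac:(lia)); [left|right]; lra.
Qed.

Lemma quantize_satisfies (n : nat) (a : nat -> Z) (y : Z -> R) (s : R) :
  satisfies n a y -> satisfies n a (fun j => quantize s (y j)).
Proof. apply satisfies_comp; [apply quantize_le|apply quantize_add_int]. Qed.

Lemma periodic_of_quantize_periodic (n : nat) (y : Z -> R) :
  (forall s, 0 < s <= 1 -> periodic (fun j => quantize s (y j))) ->
  (forall j, 0 < frac_part (y j) ->
     exists i, (i < n)%nat /\ frac_part (y (Z.of_nat i)) = frac_part (y j)) ->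
  periodic y.
Proof.
  intros Hper Hfrac.
  (* the thresholds are [1] and the positive fractional parts of [y 0], ..., [y (n - 1)] *)
  set (t := fun i : nat => if (i <? n)%nat then
              if Rlt_dec 0 (frac_part (y (Z.of_nat i))) then frac_part (y (Z.of_nat i))
              else 1
            else 1).
  assert (Ht : forall i, 0 < t i <= 1).
  { intros i. pose proof (base_fp (y (Z.of_nat i))). unfold t.
    destruct (i <? n)%nat; [destruct Rlt_dec|]; lra. }
  assert (Ht1 : t n = 1) by (unfold t; now rewrite Nat.ltb_irrefl).
  assert (Htfrac : forall j, 0 < frac_part (y j) ->
                     exists i, (i <= n)%nat /\ t i = frac_part (y j)).
  { intros j Hj. destruct (Hfrac j Hj) as [i [Hi Hfi]].
    exists i. split; [lia|]. unfold t. rewrite (proj2 (Nat.ltb_lt i n) Hi).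
    destruct Rlt_dec; [exact Hfi|lra]. }
  destruct (common_period (fun i j => quantize (t i) (y j)) n) as [P [HP HPt]].
  { intros i _. apply Hper, Ht. }
  exists P. split; [exact HP|]. intros j.
  assert (Hq : forall i, (i <= n)%nat ->
                 quantize (t i) (y (j + P)%Z) = quantize (t i) (y j)).
  { intros i Hi. exact (HPt i Hi j). }
  apply eq_of_quantize.
  - rewrite <- Ht1. now apply Hq.
  - intros Hpos. destruct (Htfrac _ Hpos) as [i [Hi <-]]. now apply Hq.
  - intros Hpos. destruct (Htfrac _ Hpos) as [i [Hi <-]]. now apply Hq.
Qed.

Lemma quantize_separates (n : nat) (y : Z -> R) (j : Z) :
  0 < frac_part (y j) ->
  (forall i, (i < n)%nat -> frac_part (y (Z.of_nat i)) <> frac_part (y j)) ->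
  exists s s', 0 < s <= 1 /\ 0 < s' <= 1 /\
    (forall i, (i < n)%nat -> quantize s (y (Z.of_nat i)) = quantize s' (y (Z.of_nat i))) /\
    quantize s (y j) <> quantize s' (y j).
Proof.
  intros Hj Hnew. pose proof (base_fp (y j)).
  destruct (exists_gap (fun i => frac_part (y (Z.of_nat i))) (frac_part (y j)) n)
    as [e [He [He1 Hgap]]]; [lra|exact Hnew|].
  exists (frac_part (y j)), (frac_part (y j) + e).
  split; [lra|split; [lra|split]].
  - intros i Hi. pose proof (base_fp (y (Z.of_nat i))).
    destruct (Hgap i Hi).
    + rewrite !quantize_low by lra. reflexivity.
    + rewrite !quantize_high by lra. reflexivity.
  - rewrite quantize_high, quantize_low by lra. lra.
Qed.

Lemma nonperiodic_quantized (n M : nat) (a : nat -> Z) (y : Z -> R) :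
  (1 <= M)%nat -> satisfies n a y -> ~ periodic y ->
  (forall j, 0 <= y j <= IZR (Z.of_nat M)) ->
  exists z, satisfies n a z /\ ~ periodic z /\ forall j, in_V n M (z j).
Proof.
  intros HM Hsat Hnp Hbound.
  assert (HV : forall s, 0 < s <= 1 -> forall j, in_V n M (quantize s (y j))).
  { intros s Hs j. apply in_V_int; [exact HM|]. now apply quantize_range. }
  destruct (classic (exists s, 0 < s <= 1 /\ ~ periodic (fun j => quantize s (y j))))
    as [[s [Hs Hnps]]|Hall].
  { exists (fun j => quantize s (y j)).
    split; [now apply quantize_satisfies|]. split; [exact Hnps|now apply HV]. }
  assert (Hper : forall s, 0 < s <= 1 -> periodic (fun j => quantize s (y j))).
  { intros s Hs. apply NNPP. intros Hnps. apply Hall. eauto. }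
  destruct (classic (exists j, 0 < frac_part (y j) /\
              forall i, (i < n)%nat -> frac_part (y (Z.of_nat i)) <> frac_part (y j)))
    as [[j [Hj Hnew]]|Hold].
  - destruct (quantize_separates n y j Hj Hnew) as (s & s' & Hs & Hs' & Hagree & Hdiff).
    exists (glue (fun k => quantize s (y k)) (fun k => quantize s' (y k))).
    split; [|split].
    + apply satisfies_glue; [now apply quantize_satisfies..|exact Hagree].
    + apply (glue_not_periodic _ _ j); auto.
    + intros k. unfold glue. destruct (k <? 0)%Z; now apply HV.
  - exfalso. apply Hnp, (periodic_of_quantize_periodic n); [exact Hper|].
    intros j Hj. apply NNPP. intros Hno. apply Hold. exists j. split; [exact Hj|].
    intros i Hi Heq. apply Hno. eauto.
Qed.

Theorem lemma4 (n M : nat) (a : nat -> Z) :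
  (1 <= n)%nat -> (1 <= M)%nat ->
  (forall i : nat, (i <= n)%nat -> (0 <= a i <= Z.of_nat M)%Z) ->
  a 0%nat = 0%Z -> a n = 0%Z ->
  (exists y : Z -> R, satisfies n a y /\ minimal_seq n a y /\ ~ periodic y) ->
  exists z : Z -> R, satisfies n a z /\ ~ periodic z /\ (forall j : Z, in_V n M (z j)).
Proof.
  intros Hn HM Ha Ha0 Han [y [Hsat [Hminimal Hnp]]].
  destruct (minimal_bounded n a y Hn (fun i Hi => proj1 (Ha i Hi)) Ha0 Han Hsat M Hminimal
              (fun i Hi => proj2 (Ha i Hi))) as [c Hc].
  apply (nonperiodic_quantized n M a (fun j => y j - c) HM).
  - apply (satisfies_comp n a y (fun x => x - c)); [intros; lra|intros; ring|exact Hsat].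
  - intros [d [Hd Pd]]. apply Hnp. exists d. split; [exact Hd|].
    intros j. specialize (Pd j). lra.
  - intros j. specialize (Hc j). lra.
Qed.
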